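(* Let $\Gamma$ be a cycle (a graph whose underlying simple graph is a cycle), possibly with some 2-fold edges. Then $\Gamma$ is the family diagram of at most one family of spherical simplices whose dihedral angles lie in $\{\frac{\pi}{2},\frac{\pi}{3},\frac{2\pi}{3},\frac{\pi}{4},\frac{3\pi}{4}\}$ (families considered up to isometry).
   Context: A spherical simplex in $S^n\subset\mathbb{R}^{n+1}$ is given by unit outer normals $f_1,\dots,f_{n+1}$ to its facets; the hyperplanes $f_i^\perp$ cut $S^n$ into $2^{n+1}$ simplices encoded by $\pm f_1,\dots,\pm f_{n+1}$, called a family. For a simplex whose dihedral angles are of the form $\pi/k$ or $\pi(k-1)/k$, its family diagram is the graph with vertices $v_i$ corresponding to the $f_i$, where $v_i$ and $v_j$ are joined by a $(k-2)$-fold edge if the angle between $f_i,f_j$ is $\pi/k$ or $\pi(k-1)/k$, and are not joined if $f_i\perp f_j$. All simplices of a family have the same family diagram; a graph is the family diagram of a family if it is the family diagram of its simplices. *)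

From HB Require Import structures.
From mathcomp Require Import all_boot all_order all_algebra perm.
From mathcomp Require Import all_classical all_reals.
From mathcomp Require Import trigo.
Set Implicit Arguments. Unset Strict Implicit. Unset Printing Implicit Defensive.
Import Order.TTheory GRing.Theory Num.Theory.
Local Open Scope ring_scope.

Definition dotv {R : realType} {m : nat} (u v : 'rV[R]_m) : R :=
  (u *m v^T) ord0 ord0.

Definition vangle {R : realType} {m : nat} (u v : 'rV[R]_m) : R :=
  acos (dotv u v).

(* A spherical simplex in S^(m-1) subset R^m is encoded by the matrix F whose
   rows f_i = row i F are the unit outer normals to its facets; they must be
   unit vectors and linearly independent. *)
Definition is_simplex {R : realType} {m : nat} (F : 'M[R]_m) : Prop :=
  (forall i, dotv (row i F) (row i F) = 1) /\ F \in unitmx.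

Definition dihedral {R : realType} {m : nat} (F : 'M[R]_m) (i j : 'I_m) : R :=
  pi - vangle (row i F) (row j F).

Definition angles_in_set {R : realType} {m : nat} (F : 'M[R]_m) : Prop :=
  forall i j : 'I_m, i != j ->
    let a := dihedral F i j in
    a = pi / 2 \/ a = pi / 3 \/ a = 2 * pi / 3 \/ a = pi / 4 \/ a = 3 * pi / 4.

Definition multigraph (m : nat) := 'I_m -> 'I_m -> nat.

(* Gamma is the family diagram of (the family of) F: after a relabelling p of
   the vertices, vertices v_i <-> f_(p i), and for i != j, the multiplicity of
   the edge v_i v_j is k - 2 where the angle between f_(p i), f_(p j) is
   pi/k or pi(k-1)/k (k >= 2; k = 2 means orthogonal, i.e. no edge). *)
Definition is_family_diagram {R : realType} {m : nat}
    (Gam : multigraph m) (F : 'M[R]_m) : Prop :=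
  exists p : {perm 'I_m},
    (forall i, Gam i i = 0%N) /\
    forall i j : 'I_m, i != j ->
      exists k : nat, (2 <= k)%N /\ Gam i j = (k - 2)%N /\
        let a := vangle (row (p i) F) (row (p j) F) in
        (a = pi / k%:R \/ a = pi * (k - 1)%:R / k%:R).

Definition is_cycle_diagram (m : nat) (Gam : multigraph m) : Prop :=
  (3 <= m)%N /\
  (forall i j, Gam i j = Gam j i) /\
  (forall i j, (Gam i j <= 2)%N) /\
  exists c : {perm 'I_m}, forall a b : 'I_m,
    (Gam (c a) (c b) != 0%N) =
      ((val b == (val a).+1 %% m)%N || (val a == (val b).+1 %% m)%N).

(* The family of F: the set of vectors +-f_i (encoding the 2^m simplices). *)
Definition family {R : realType} {m : nat} (F : 'M[R]_m) : set 'rV[R]_m :=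
  [set v | exists (i : 'I_m) (s : bool), v = (-1) ^+ s *: row i F].

Definition isometric_families {R : realType} {m : nat} (F G : 'M[R]_m) : Prop :=
  exists Q : 'M[R]_m, Q *m Q^T = 1%:M /\
    forall v : 'rV[R]_m, family F v <-> family G (v *m Q).

From Pilot Require Import Defs.
From HB Require Import structures.
From mathcomp Require Import all_boot all_order all_algebra perm.
From mathcomp Require Import all_classical all_reals.
From mathcomp Require Import trigo.
From mathcomp Require Import ring lra zify.
Set Implicit Arguments. Unset Strict Implicit.
Import Order.TTheory GRing.Theory Num.Theory.
Local Open Scope ring_scope.

(* Order the facet normals along the cycle.  Their Gram matrix then has ones
   on the diagonal, entries +-cos(pi/k) on the cycle edges and zeros elsewhere,
   so it is determined by the diagram up to the signs of the edge entries.
   Replacing a normal f_i by -f_i (which does not change the family) flips the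
   signs of the two edges at i, so the only invariant of these signs is their
   product around the cycle, and this product is forced: were it the "wrong"
   one, a sign change would make every edge entry at most -cos(pi/3) = -1/2,
   and the vector of switching signs would then have a nonpositive Gram form,
   contradicting the linear independence of the normals.  Hence two simplices
   with the same diagram have equal Gram matrices after reordering and
   sign changes, and equal Gram matrices of two bases differ by an orthogonal
   map. *)

Section Trigonometry.
Variable R : realType.

Lemma cosBpi (x : R) : cos (pi - x) = - cos x.
Proof. by rewrite -cosN opprB cosB cospi sinpi mulr0 addr0 mulrN1. Qed.

Lemma cos_pi_third : cos (pi / 3) = 1 / 2 :> R.
Proof.
set c := cos (pi / 3).
have c_gt0 : 0 < c by apply: cos_gt0_pihalf; have := pi_gt0 R; lra.
have : cos (pi / 3 *+ 2) = - c by rewrite -cosBpi mulr2n; congr cos; field.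
rewrite cos_mulr2n -/c => c2.
have /eqP : (2 * c - 1) * (c + 1) = 0 by nra.
by rewrite mulf_eq0 => /orP[] /eqP; lra.
Qed.

Lemma cos_pi_quarter_ge : 1 / 2 <= cos (pi / 4) :> R.
Proof.
rewrite -cos_pi_third; apply/ltW; rewrite ltr_cos ?in_itv /=;
  have := pi_gt0 R; lra.
Qed.

Lemma cos_pi_frac_compl (K : nat) : (0 < K)%N ->
  cos (pi * (K - 1)%:R / K%:R) = - cos (pi / K%:R) :> R.
Proof.
move=> K_gt0; rewrite -cosBpi natrB //; congr cos.
by field; rewrite pnatr_eq0 -lt0n.
Qed.

End Trigonometry.

Section DotProduct.
Variables (R : realType) (m : nat).
Implicit Types u v : 'rV[R]_m.

Lemma dotvE u v : dotv u v = \sum_i u 0 i * v 0 i.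
Proof. by rewrite /dotv !mxE; apply: eq_bigr => i _; rewrite !mxE. Qed.

Lemma dotv_ge0 u : 0 <= dotv u u.
Proof. by rewrite dotvE; apply: sumr_ge0 => i _; rewrite -expr2 sqr_ge0. Qed.

Lemma dotv_gt0 u : u != 0 -> 0 < dotv u u.
Proof.
apply: contraNT; rewrite -leNgt => u_le0; apply/eqP/rowP => i; rewrite mxE.
have /psumr_eq0P u0 : \sum_i u 0 i * u 0 i = 0.
  by apply/le_anti; rewrite -dotvE u_le0 dotv_ge0.
by apply/eqP; rewrite -sqrf_eq0 expr2 u0 // => j _; rewrite -expr2 sqr_ge0.
Qed.

Lemma dotv_unit_bound u v : dotv u u = 1 -> dotv v v = 1 -> -1 <= dotv u v <= 1.
Proof.
rewrite !dotvE => uu vv.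
have expand s : s ^+ 2 = 1 -> 0 <= 2 + 2 * s * \sum_i u 0 i * v 0 i.
  move=> s2; have : 0 <= \sum_i (u 0 i + s * v 0 i) ^+ 2.
    by apply: sumr_ge0 => i _; exact: sqr_ge0.
  have -> : \sum_i (u 0 i + s * v 0 i) ^+ 2 = \sum_i u 0 i * u 0 i
      + s ^+ 2 * \sum_i v 0 i * v 0 i + 2 * s * \sum_i u 0 i * v 0 i.
    by rewrite !mulr_sumr -!big_split; apply: eq_bigr => i _ /=; ring.
  by rewrite uu vv s2; lra.
have := expand 1 (sqrr_sign _ 0); have := expand (-1) (sqrr_sign _ 1).
lra.
Qed.

Lemma cos_vangle u v :
  dotv u u = 1 -> dotv v v = 1 -> cos (vangle u v) = dotv u v.
Proof. by move=> uu vv; rewrite /vangle acosK // in_itv /= dotv_unit_bound. Qed.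

End DotProduct.

Lemma val_iter_ordS m k (l : 'I_m) : (val (iter k (@ordS m) l) = (l + k) %% m)%N.
Proof.
elim: k => [|k IHk] /=; first by rewrite addn0 modn_small.
by rewrite IHk -addn1 modnDml -addnA addn1.
Qed.

Lemma iter_ordS_neq m k (l : 'I_m) : (0 < k < m)%N -> iter k (@ordS m) l != l.
Proof.
case/andP=> k_gt0 k_ltm; apply: contraTneq k_gt0 => /(congr1 val)/eqP.
rewrite val_iter_ordS -[X in _ == X](modn_small (ltn_ord l)).
rewrite -[X in (_ == X %% _)%N]addn0 eqn_modDl mod0n modn_small //.
by move/eqP ->.
Qed.

Lemma ordS_neq m (l : 'I_m) : (1 < m)%N -> ordS l != l.
Proof. by move=> m_gt1; apply: (@iter_ordS_neq m 1); lia. Qed.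

Lemma ordS2_neq m (l : 'I_m) : (2 < m)%N -> ordS (ordS l) != l.
Proof. by move=> m_gt2; apply: (@iter_ordS_neq m 2); lia. Qed.

Lemma cycle_potential (R : comPzRingType) m (r : 'I_m -> R) :
  (forall k, r k ^+ 2 = 1) -> \prod_k r k = 1 ->
  exists e : 'I_m -> R,
    (forall k, e k ^+ 2 = 1) /\ forall k, e (ordS k) = e k * r k.
Proof.
move=> r2 r_prod.
exists (fun k : 'I_m => \prod_(j : 'I_m | (j < k)%N) r j); split=> [k|k].
  apply: (big_ind (fun x : R => x ^+ 2 = 1)) => //; first exact: expr1n.
  by move=> x y x2 y2; rewrite exprMn x2 y2 mulr1.
rewrite /ordS /=; have [k_last|k_lt] := eqVneq k.+1 m.
  rewrite k_last modnn big_pred0 // -[LHS]r_prod (bigD1 k) //= mulrC.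
  congr (_ * _); apply: eq_bigl => j.
  by rewrite [RHS]ltn_neqAle -ltnS k_last ltn_ord andbT.
rewrite modn_small; last by have := ltn_ord k; lia.
rewrite (bigD1 k) //= mulrC; congr (_ * _).
by apply: eq_bigl => j; rewrite ltnS ltn_neqAle andbC.
Qed.

Section Gram.
Variables (R : realType) (p m : nat).

Lemma gramE (M : 'M[R]_(p, m)) a b : (M *m M^T) a b = dotv (row a M) (row b M).
Proof. by rewrite dotvE mxE; apply: eq_bigr => i _; rewrite !mxE. Qed.

Lemma gram_sym (M : 'M[R]_(p, m)) a b : (M *m M^T) a b = (M *m M^T) b a.
Proof. by rewrite !mxE; apply: eq_bigr => i _; rewrite !mxE mulrC. Qed.

Lemma gram_form_gt0 (A : 'M[R]_m) (X : 'rV[R]_m) :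
  A \in unitmx -> X != 0 -> 0 < (X *m (A *m A^T) *m X^T) 0 0.
Proof.
move=> A_unit X_neq0; rewrite !mulmxA -mulmxA -trmx_mul.
apply: dotv_gt0; apply: contraNneq X_neq0 => XA0.
by rewrite -(mulmxK A_unit X) XA0 mul0mx.
Qed.

End Gram.

Lemma cycle_form_le0 (R : realFieldType) m (H : 'M[R]_m) (x : 'I_m -> R) :
  (2 < m)%N -> (forall k l, H k l = H l k) -> (forall k, H k k = 1) ->
  (forall k l, l != k -> l != ordS k -> k != ordS l -> H k l = 0) ->
  (forall k, x k ^+ 2 = 1) ->
  (forall k, x k * x (ordS k) * H k (ordS k) <= - (1 / 2)) ->
  (\row_k x k *m H *m (\row_k x k)^T) 0 0 <= 0.
Proof.
move=> m_gt2 H_sym H_diag H_off x_sign x_adj.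
rewrite !mxE; apply: sumr_le0 => l _; rewrite !mxE mulr_suml.
set q := ord_pred l; set s := ordS l.
have ordSq : ordS q = l by rewrite ord_predK.
have s_neq_l : s != l by rewrite ordS_neq 1?ltnW.
have q_neq_l : q != l by rewrite -(inj_eq (@ordS_inj m)) ordSq eq_sym.
have s_neq_q : s != q.
  by rewrite -(inj_eq (@ordS_inj m)) ordSq ordS2_neq.
(* Row [l] meets [H] only in the columns [q], [l] and [s]. *)
rewrite (bigD1 l) //= (bigD1 q) //= (bigD1 s) /=; last by rewrite s_neq_l s_neq_q.
rewrite big1 ?addr0 => [|k /andP[/andP[k_neq_l k_neq_q] k_neq_s]]; last first.
  rewrite !mxE H_off ?mulr0 ?mul0r // 1?eq_sym //.
  by apply: contraNneq k_neq_q; rewrite /q => <-; rewrite ordSK.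
rewrite !mxE H_diag mulr1 -expr2 x_sign [H s l]H_sym.
have := x_adj q; have := x_adj l; rewrite ordSq -/s.
lra.
Qed.

Section CycleGram.
Variables (R : realType) (m : nat) (w : 'I_m -> R).
Implicit Types (H : 'M[R]_m) (k : 'I_m).

Definition is_cycle_gram (H : 'M[R]_m) : Prop :=
  [/\ forall k, H k k = 1,
      forall k, H k (ordS k) = w k \/ H k (ordS k) = - w k &
      forall k l, l != k -> l != ordS k -> k != ordS l -> H k l = 0].

Definition edge_sign (H : 'M[R]_m) k : R := - (H k (ordS k) / w k).

Hypotheses (m_gt2 : (2 < m)%N) (w_ge_half : forall k, 1 / 2 <= w k).

Lemma weight_neq0 k : w k != 0.
Proof. by apply: contraTneq (w_ge_half k) => ->; rewrite -ltNge; lra. Qed.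

Lemma edge_signE H k : H k (ordS k) = - (edge_sign H k * w k).
Proof. by rewrite /edge_sign mulNr opprK divfK ?weight_neq0. Qed.

Lemma edge_sign_sqr H k : is_cycle_gram H -> edge_sign H k ^+ 2 = 1.
Proof.
case=> _ H_adj _; rewrite /edge_sign sqrrN expr_div_n.
by case: (H_adj k) => ->; rewrite ?sqrrN divff // expf_neq0 ?weight_neq0.
Qed.

Lemma prod_edge_sign (A : 'M[R]_m) :
  A \in unitmx -> is_cycle_gram (A *m A^T) -> \prod_k edge_sign (A *m A^T) k = -1.
Proof.
move=> A_unit AA; set H := A *m A^T; set t := edge_sign H.
have t_sqr k : t k ^+ 2 = 1 by exact: edge_sign_sqr.
have : (\prod_k t k) ^+ 2 = 1.
  by rewrite -prodrXl; apply: big1 => k _; exact: t_sqr.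
move/eqP; rewrite sqrf_eq1 => /orP[/eqP t_prod|/eqP //]; exfalso.
have [x [x_sign x_step]] := cycle_potential t_sqr t_prod.
case: AA => H_diag _ H_off.
have x_adj k : x k * x (ordS k) * H k (ordS k) <= - (1 / 2).
  rewrite x_step edge_signE -/t.
  have -> : x k * (x k * t k) * - (t k * w k) = - (x k ^+ 2 * t k ^+ 2 * w k).
    by ring.
  by rewrite x_sign t_sqr !mul1r; have := w_ge_half k; lra.
have X_neq0 : \row_k x k != 0.
  apply/eqP => /rowP /(_ (Ordinal (ltnW (ltnW m_gt2)))) /eqP; rewrite !mxE.
  by apply/negP; rewrite -sqrf_eq0 x_sign oner_neq0.
have := cycle_form_le0 m_gt2 (gram_sym A) H_diag H_off x_sign x_adj.
by rewrite leNgt gram_form_gt0.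
Qed.

Lemma cycle_gram_switching (A B : 'M[R]_m) :
  A \in unitmx -> B \in unitmx ->
  is_cycle_gram (A *m A^T) -> is_cycle_gram (B *m B^T) ->
  exists e : 'I_m -> R, (forall k, e k ^+ 2 = 1) /\
    forall a b, (B *m B^T) a b = e a * e b * (A *m A^T) a b.
Proof.
move=> A_unit B_unit AA BB.
set sA := edge_sign (A *m A^T); set sB := edge_sign (B *m B^T).
have r_sqr k : (sA k * sB k) ^+ 2 = 1 by rewrite exprMn !edge_sign_sqr ?mulr1.
have r_prod : \prod_k (sA k * sB k) = 1.
  by rewrite big_split /= !prod_edge_sign // mulrNN mulr1.
have [e [e_sign e_step]] := cycle_potential r_sqr r_prod.
have adj k : (B *m B^T) k (ordS k) = e k * e (ordS k) * (A *m A^T) k (ordS k).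
  rewrite e_step !edge_signE -/sA -/sB.
  have -> : e k * (e k * (sA k * sB k)) * - (sA k * w k)
          = - (e k ^+ 2 * sA k ^+ 2 * (sB k * w k)) by ring.
  by rewrite e_sign edge_sign_sqr // !mul1r.
exists e; split=> // a b; case: AA BB => [A_diag _ A_off] [B_diag _ B_off].
have [<-|a_neq_b] := eqVneq a b.
  by rewrite A_diag B_diag mulr1 -expr2 e_sign.
have [->|b_neq_Sa] := eqVneq b (ordS a); first exact: adj.
have [->|a_neq_Sb] := eqVneq a (ordS b).
  by rewrite [LHS]gram_sym adj [in RHS]gram_sym [e b * _]mulrC.
by rewrite A_off ?B_off ?mulr0 // eq_sym.
Qed.

End CycleGram.

Section Families.
Variables (R : realType) (m : nat).
Implicit Types (F G Q : 'M[R]_m) (v : 'rV[R]_m).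

(* [Defs.family] is qualified because finfun's [family] shadows it. *)
Lemma family_row_perm (s : {perm 'I_m}) F v :
  Defs.family (row_perm s F) v <-> Defs.family F v.
Proof.
rewrite row_permEsub; split=> [[i [b ->]]|[i [b ->]]].
  by exists (s i), b; rewrite row_rowsub.
by exists (s^-1 i)%g, b; rewrite row_rowsub permKV.
Qed.

Lemma family_signed (e : 'I_m -> R) F v : (forall k, e k ^+ 2 = 1) ->
  Defs.family (diag_mx (\row_k e k) *m F) v <-> Defs.family F v.
Proof.
move=> e_sign; have rowDF i : row i (diag_mx (\row_k e k) *m F) = e i *: row i F.
  by apply/rowP => j; rewrite mul_diag_mx !mxE.
have e_signr i : exists c : bool, e i = (-1) ^+ c.
  move/eqP: (e_sign i); rewrite sqrf_eq1 => /orP[]/eqP->.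
    by exists false.
  by exists true.
split=> [[i [b ->]]|[i [b ->]]]; have [c ec] := e_signr i; exists i, (b (+) c).
  by rewrite rowDF ec scalerA -signr_addb.
by rewrite rowDF ec scalerA -signr_addb addbK.
Qed.

Lemma family_mulmx F Q v :
  Q *m Q^T = 1%:M -> Defs.family F v <-> Defs.family (F *m Q) (v *m Q).
Proof.
move=> QQ; split=> [[i [b ->]]|[i [b vQ]]].
  by exists i, b; rewrite row_mul scalemxAl.
exists i, b; have := congr1 (mulmx^~ Q^T) vQ.
by rewrite /= row_mul -scalemxAl -!mulmxA QQ !mulmx1.
Qed.

Lemma orthogonal_of_gram_eq (A B : 'M[R]_m) :
  A \in unitmx -> A *m A^T = B *m B^T -> exists2 Q, Q *m Q^T = 1%:M & A *m Q = B.
Proof.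
move=> A_unit AB; exists (invmx A *m B); last by rewrite mulKVmx.
rewrite trmx_mul mulmxA -(mulmxA _ B) -AB mulmxA mulVmx // mul1mx.
by rewrite trmx_inv mulmxV // unitmx_tr.
Qed.

Lemma isometric_families_signed_gram F G (sF sG : {perm 'I_m}) (e : 'I_m -> R) :
  (forall k, e k ^+ 2 = 1) -> row_perm sF F \in unitmx ->
  (forall a b, (row_perm sG G *m (row_perm sG G)^T) a b
               = e a * e b * (row_perm sF F *m (row_perm sF F)^T) a b) ->
  isometric_families F G.
Proof.
set A := row_perm sF F; set B := diag_mx (\row_k e k) *m row_perm sG G.
move=> e_sign A_unit gram_eq.
have BB a b :
    (B *m B^T) a b = e a * e b * (row_perm sG G *m (row_perm sG G)^T) a b.
  rewrite /B mul_diag_mx !mxE mulr_sumr.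
  by apply: eq_bigr => j _; rewrite !mxE; ring.
have /(orthogonal_of_gram_eq A_unit) [Q QQ AQ] : A *m A^T = B *m B^T.
  by apply/matrixP => a b; rewrite BB gram_eq mulrA -expr2 exprMn !e_sign !mul1r.
exists Q; split=> // v.
apply: iff_trans (iff_sym (family_row_perm sF F v)) _.
apply: iff_trans (family_mulmx _ _ QQ) _; rewrite AQ.
apply: iff_trans (family_signed _ _ e_sign) _; exact: family_row_perm.
Qed.

End Families.

Section FamilyDiagram.
Variable R : realType.

Definition edge_cos (g : nat) : R := cos (pi / (g + 2)%:R).

Lemma edge_cos0 : edge_cos 0 = 0.
Proof. by rewrite /edge_cos add0n cos_pihalf. Qed.

Lemma edge_cos_ge_half g : (0 < g <= 2)%N -> 1 / 2 <= edge_cos g.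
Proof.
rewrite /edge_cos; case: g => [|[|[|g]]] //= _; first by rewrite cos_pi_third.
exact: cos_pi_quarter_ge.
Qed.

Lemma dotv_family_angle m (u v : 'rV[R]_m) (K : nat) :
  dotv u u = 1 -> dotv v v = 1 -> (2 <= K)%N ->
  vangle u v = pi / K%:R \/ vangle u v = pi * (K - 1)%:R / K%:R ->
  dotv u v = edge_cos (K - 2) \/ dotv u v = - edge_cos (K - 2).
Proof.
move=> uu vv K_ge2 angle; rewrite /edge_cos subnK // -(cos_vangle uu vv).
by case: angle => ->; [left | right; rewrite cos_pi_frac_compl // ltnW].
Qed.

Lemma family_diagram_cycle_gram m (Gam : multigraph m) (c : {perm 'I_m})
    (F : 'M[R]_m) :
  (1 < m)%N ->
  (forall a b : 'I_m, (Gam (c a) (c b) != 0%N) =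
      ((val b == (val a).+1 %% m)%N || (val a == (val b).+1 %% m)%N)) ->
  is_simplex F -> is_family_diagram Gam F ->
  exists s : {perm 'I_m}, row_perm s F \in unitmx /\
    is_cycle_gram (fun k => edge_cos (Gam (c k) (c (ordS k))))
                  (row_perm s F *m (row_perm s F)^T).
Proof.
move=> m_gt1 adj [F_norm F_free] [p [_ F_angle]].
have rowF a : row a (row_perm (c * p) F) = row (p (c a)) F.
  by rewrite row_permEsub row_rowsub permM.
set A := row_perm (c * p) F.
have gram_pair a b : a != b ->
  (A *m A^T) a b = edge_cos (Gam (c a) (c b)) \/
  (A *m A^T) a b = - edge_cos (Gam (c a) (c b)).
  move=> a_neq_b; have /F_angle[K [K_ge2 [-> angle]]] : c a != c b.
    by rewrite (inj_eq perm_inj).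
  by rewrite gramE !rowF; exact: dotv_family_angle.
exists (c * p)%g; split; first by rewrite row_permE unitmx_mul unitmx_perm.
split=> [k|k|k l l_neq_k l_neq_Sk k_neq_Sl].
- by rewrite gramE rowF F_norm.
- by apply: gram_pair; rewrite eq_sym ordS_neq.
have /negPn/eqP Gam0 : ~~ (Gam (c k) (c l) != 0%N).
  by rewrite adj negb_or l_neq_Sk.
by case: (gram_pair k l); rewrite 1?eq_sym // Gam0 edge_cos0 ?oppr0.
Qed.

End FamilyDiagram.

Theorem lemma1 (R : realType) (m : nat) (Gam : multigraph m) :
  is_cycle_diagram Gam ->
  forall F G : 'M[R]_m,
    is_simplex F -> angles_in_set F -> is_family_diagram Gam F ->
    is_simplex G -> angles_in_set G -> is_family_diagram Gam G ->
    isometric_families F G.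
Proof.
(* The angle hypotheses follow from the multiplicities being at most 2. *)
move=> [m_gt2 [_ [Gam_le2 [c adj]]]] F G F_simplex _ F_diag G_simplex _ G_diag.
pose w k := edge_cos R (Gam (c k) (c (ordS k))).
have w_ge_half k : 1 / 2 <= w k.
  by apply: edge_cos_ge_half; rewrite Gam_le2 lt0n adj /= eqxx.
have m_gt1 := ltnW m_gt2.
have [sF [AF_unit AF]] := family_diagram_cycle_gram m_gt1 adj F_simplex F_diag.
have [sG [AG_unit AG]] := family_diagram_cycle_gram m_gt1 adj G_simplex G_diag.
have [e [e_sign gram_eq]] :=
  cycle_gram_switching m_gt2 w_ge_half AF_unit AG_unit AF AG.
exact: isometric_families_signed_gram e_sign AF_unit gram_eq.
Qed.
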